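(* Let $v\in\Sigma^*$ and let $u$ be a $v$-minimal word. Then for any $a,b\in\Sigma^*$, the word $aub$ either belongs to $\mathrm{Rad}(\mathcal{A})$ or is $v$-minimal.
   Context: Let $\mathcal{A}=\langle Q,\Sigma,\delta\rangle$ be a synchronizing automaton with $n$ states $q_1,\dots,q_n$. Each word $u$ acts linearly on $\mathbb{C}Q$ by $q\mapsto q\cdot u$, preserving $w^\perp=\{x:\langle x,w\rangle=0\}$ with $w=q_1+\dots+q_n$; let $\rho:\Sigma^*\to\mathbb{M}_{n-1}(\mathbb{C})\cong\mathrm{End}(w^\perp)$ be the induced representation, $\mathcal{R}$ the $\mathbb{C}$-algebra generated by $\rho(\Sigma^* )$, and $\mathrm{Rad}(\mathcal{A})=\rho^{-1}(\mathrm{Rad}(\mathcal{R}))$ (Jacobson radical). Write $\mathcal{R}/\mathrm{Rad}(\mathcal{R})\cong\mathbb{M}_{n_1}(\mathbb{C})\times\dots\times\mathbb{M}_{n_k}(\mathbb{C})$ (Wedderburn–Artin), and let $\theta_i:\Sigma^*\to\mathbb{M}_{n_i}(\mathbb{C})$ be the composite of $\rho$, the quotient map, and the projection onto the $i$-th factor; $0_i$ is the zero matrix. A word is in $\mathrm{Rad}(\mathcal{A})$ iff $\theta_i$ of it is $0_i$ for all $i$. The support of a word $z$ is $\mathrm{supp}(z)=\{i\in[1,k]:\theta_i(z)\neq0_i\}$. For $v\in\Sigma^*$, a word $u\in\Sigma^*v\Sigma^*$ is $v$-minimal, and $\mathrm{supp}(u)$ is a $v$-minimal section, if $\mathrm{supp}(u)\neq\emptyset$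 and there is no $z\in\Sigma^*v\Sigma^*$ with $\emptyset\neq\mathrm{supp}(z)\subsetneq\mathrm{supp}(u)$. *)

From HB Require Import structures.
From mathcomp Require Import all_boot all_order all_algebra.
From mathcomp Require Import complex.
From mathcomp Require Import Rstruct.
Set Implicit Arguments. Unset Strict Implicit. Unset Printing Implicit Defensive.
Import Order.TTheory GRing.Theory Num.Theory.
Local Open Scope ring_scope.

Definition CC : Type := complex Rdefinitions.R.

Section Automaton.
(* An automaton with n = m.+1 states, states are 'I_m.+1, alphabet Sigma. *)
Variables (Sigma : finType) (m : nat) (delta : 'I_m.+1 -> Sigma -> 'I_m.+1).

Definition act (q : 'I_m.+1) (u : seq Sigma) : 'I_m.+1 := foldl delta q u.

Definition synchronizing : Prop :=
  exists u : seq Sigma, forall p q, act p u = act q u.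

(* Induced representation on w^perp, w = q_1 + ... + q_n, written in the basis
   f_i = q_i - q_n (i < n-1) of w^perp, for the right action x |-> x . u
   on row vectors: f_i . u = f_{i.u} - f_{n.u} (with f_n := 0). *)
Definition rho (u : seq Sigma) : 'M[CC]_m :=
  \matrix_(i < m, j < m)
     (((act (widen_ord (leqnSn m) i) u == widen_ord (leqnSn m) j)%:R : CC)
      - ((act ord_max u == widen_ord (leqnSn m) j)%:R : CC)).

(* The C-algebra R generated by rho(Sigma^* ) is the C-span of rho(Sigma^* )
   (which is already closed under products and contains rho(empty word) = 1). *)
Definition inR (x : 'M[CC]_m) : Prop :=
  exists (k : nat) (ws : k.-tuple (seq Sigma)) (c : k.-tuple CC),
    x = \sum_(i < k) tnth c i *: rho (tnth ws i).

Definition leftIdeal (L : 'M[CC]_m -> Prop) : Prop :=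
  [/\ forall x, L x -> inR x,
      L 0,
      forall x y, L x -> L y -> L (x - y)
    & forall r x, inR r -> L x -> L (r *m x)].

Definition maximalLeftIdeal (L : 'M[CC]_m -> Prop) : Prop :=
  [/\ leftIdeal L,
      exists x, inR x /\ ~ L x
    & forall L', leftIdeal L' -> (forall x, L x -> L' x) ->
        (forall x, L' x <-> L x) \/ (forall x, inR x -> L' x)].

Definition inRad (x : 'M[CC]_m) : Prop :=
  inR x /\ forall L, maximalLeftIdeal L -> L x.

Definition inRadA (u : seq Sigma) : Prop := inRad (rho u).

(* Wedderburn--Artin data: phi : R -> M_{n_1}(C) x ... x M_{n_k}(C) is a
   surjective unital C-algebra morphism whose kernel is Rad(R); i.e. phi is the
   composite of the quotient map R -> R/Rad(R) with an isomorphism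
   R/Rad(R) ~= prod_i M_{n_i}(C). *)
Definition WedderburnData (k : nat) (ns : 'I_k -> nat)
    (phi : 'M[CC]_m -> forall i : 'I_k, 'M[CC]_(ns i)) : Prop :=
  [/\ forall i, (0 < ns i)%N,
     [/\ forall x y, inR x -> inR y -> forall i, phi (x + y) i = phi x i + phi y i,
      forall (c : CC) x, inR x -> forall i, phi (c *: x) i = c *: phi x i,
      forall x y, inR x -> inR y -> forall i, phi (x *m y) i = phi x i *m phi y i
    & forall i, phi 1%:M i = 1%:M],
      forall f : (forall i : 'I_k, 'M[CC]_(ns i)),
        exists x, inR x /\ forall i, phi x i = f i
    & forall x, inR x -> ((forall i, phi x i = 0) <-> inRad x)].

Variables (k : nat) (ns : 'I_k -> nat)
          (phi : 'M[CC]_m -> forall i : 'I_k, 'M[CC]_(ns i)).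

(* theta_i = (projection_i) o (iso) o (quotient) o rho *)
Definition theta (i : 'I_k) (u : seq Sigma) : 'M[CC]_(ns i) := phi (rho u) i.

Definition supp (z : seq Sigma) : {set 'I_k} := [set i | theta i z != 0].

(* u in Sigma^* v Sigma^*  <->  v is a factor (infix) of u *)
Definition vMinimal (v u : seq Sigma) : Prop :=
  [/\ infix v u,
      supp u != set0
    & ~ (exists z : seq Sigma, [/\ infix v z, supp z != set0 & supp z \proper supp u])].

End Automaton.

From HB Require Import structures.
From mathcomp Require Import all_boot all_order all_algebra.
From mathcomp Require Import complex.
From mathcomp Require Import Rstruct.
Set Implicit Arguments. Unset Strict Implicit. Unset Printing Implicit Defensive.
Import Order.TTheory GRing.Theory Num.Theory.
Local Open Scope ring_scope.

(* Since rho is multiplicative and every theta_i is multiplicative on R,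
   theta_i(a u b) = theta_i(a) theta_i(u) theta_i(b) vanishes whenever theta_i(u)
   does, so supp(a u b) is contained in supp(u).  If it is empty, a u b lies in
   the radical; otherwise a z with v as a factor and nonempty support strictly
   inside supp(a u b) would also be strictly inside supp(u), against the
   v-minimality of u. *)

Lemma sum_indicator_widen_ord (R : pzRingType) (m : nat) (p : 'I_m.+1)
    (g : 'I_m.+1 -> R) :
  g ord_max = 0 ->
  \sum_(l < m) ((p == widen_ord (leqnSn m) l)%:R * g (widen_ord (leqnSn m) l)) = g p.
Proof.
move=> g_max0.
transitivity (\sum_(l < m.+1) ((p == l)%:R * g l)).
  by rewrite big_ord_recr /= g_max0 mulr0 addr0.
rewrite (bigD1 p) //= eqxx mul1r big1 ?addr0 // => l /negbTE.
by rewrite eq_sym => ->; rewrite mul0r.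
Qed.

Section Representation.

Variables (Sigma : finType) (m : nat) (delta : 'I_m.+1 -> Sigma -> 'I_m.+1).

Lemma rho_cat (u w : seq Sigma) : rho delta (u ++ w) = rho delta u *m rho delta w.
Proof.
apply/matrixP => i j; rewrite !mxE.
under eq_bigr => l _ do rewrite !mxE mulrBl.
rewrite sumrB.
pose g q := ((act delta q w == widen_ord (leqnSn m) j)%:R : CC)
            - (act delta ord_max w == widen_ord (leqnSn m) j)%:R.
have g_max0 : g ord_max = 0 by rewrite /g subrr.
rewrite !(sum_indicator_widen_ord _ g_max0) /g /act !foldl_cat.
by rewrite opprB addrA subrK.
Qed.

Lemma inR_rho (w : seq Sigma) : inR delta (rho delta w).
Proof. by exists 1%N, [tuple w], [tuple 1]; rewrite big_ord1 !tnth0 scale1r. Qed.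

End Representation.

Section Support.

Variables (Sigma : finType) (m : nat) (delta : 'I_m.+1 -> Sigma -> 'I_m.+1).
Variables (k : nat) (ns : 'I_k -> nat)
          (phi : 'M[CC]_m -> forall i : 'I_k, 'M[CC]_(ns i)).
Hypothesis hW : WedderburnData delta phi.

Lemma theta_cat i (u w : seq Sigma) :
  theta delta phi i (u ++ w) = theta delta phi i u *m theta delta phi i w.
Proof.
case: hW => _ [_ _ phiM _] _ _.
rewrite /theta rho_cat phiM //; exact: inR_rho.
Qed.

Lemma supp_infix (u z : seq Sigma) :
  infix u z -> supp delta phi z \subset supp delta phi u.
Proof.
case/infixP=> a [b ->]; apply/subsetP => i; rewrite !inE.
apply: contraNN => /eqP theta_u0.
by rewrite !theta_cat theta_u0 mul0mx mulmx0.
Qed.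

Lemma supp_eq0_inRadA (z : seq Sigma) : supp delta phi z = set0 -> inRadA delta z.
Proof.
case: hW => _ _ _ ker_phi supp_z0.
apply/(ker_phi _ (inR_rho _ _)) => i.
have : i \notin supp delta phi z by rewrite supp_z0 inE.
by rewrite inE negbK => /eqP.
Qed.

Lemma vMinimal_infix (v u z : seq Sigma) :
  vMinimal delta phi v u -> infix u z -> supp delta phi z != set0 ->
  vMinimal delta phi v z.
Proof.
case=> v_u _ u_min u_z supp_z_ne0; split=> //; first exact: infix_trans v_u u_z.
case=> y [v_y supp_y_ne0 supp_y_z]; apply: u_min; exists y; split=> //.
exact: proper_sub_trans supp_y_z (supp_infix u_z).
Qed.

End Support.

Theorem mainTheorem3 (Sigma : finType) (m : nat)
    (delta : 'I_m.+1 -> Sigma -> 'I_m.+1)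
    (hsync : synchronizing delta)
    (k : nat) (ns : 'I_k -> nat)
    (phi : 'M[CC]_m -> forall i : 'I_k, 'M[CC]_(ns i))
    (hW : WedderburnData delta phi)
    (v u : seq Sigma) (hu : vMinimal delta phi v u) :
  forall a b : seq Sigma,
    inRadA delta (a ++ u ++ b) \/ vMinimal delta phi v (a ++ u ++ b).
Proof.
move=> a b.
have [supp_z0 | supp_z_ne0] := eqVneq (supp delta phi (a ++ u ++ b)) set0.
  left; exact: (supp_eq0_inRadA hW supp_z0).
right; exact: (vMinimal_infix hW hu (infix_infix _ _ _) supp_z_ne0).
Qed.
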